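(* Let $S\in V_{\mathrm{gen}}$ and let $e\in\mathfrak g_1$ be such that the orthogonal projection of $e$ onto each eigenspace of $S^2$ is nonzero. Let $N$ be the number of distinct eigenvalues of $S^2$. For all $T\in V$, if $TS^je=0$ for $j=0,\dots,2N-1$, then $T=0$.
   Context: $\mathfrak g=\mathfrak g_1\oplus\mathfrak g_2$ is the Lie algebra of a $2$-step stratified group ($[\mathfrak g_1,\mathfrak g_1]=\mathfrak g_2\ne\{0\}$, $[\mathfrak g,\mathfrak g_2]=0$), and $\langle\cdot,\cdot\rangle$ is an inner product on $\mathfrak g_1$. For $\mu\in\mathfrak g_2^*$, $J_\mu$ is the skew-symmetric endomorphism of $\mathfrak g_1$ with $\langle J_\mu x,x'\rangle=\mu([x,x'])$. $V=\{J_\mu:\mu\in\mathfrak g_2^*\}$, a linear subspace of the skew-symmetric endomorphisms of $\mathfrak g_1$, and $V_{\mathrm{gen}}$ is the set of elements of $V$ having the maximal number of distinct eigenvalues among elements of $V$. *)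

From HB Require Import structures.
From mathcomp Require Import all_boot all_order all_algebra.
From mathcomp Require Import complex.
Set Implicit Arguments. Unset Strict Implicit. Unset Printing Implicit Defensive.
Import Order.TTheory GRing.Theory Num.Theory.
Local Open Scope ring_scope.

(* Conventions: g1 = 'rV[R]_n with the standard inner product (after choosing
   an orthonormal basis), g2 = 'rV[R]_m.  An endomorphism T of g1 is an
   n x n matrix acting on row vectors by x |-> x *m T.  The Lie bracket of the
   2-step stratified algebra is encoded by br : g1 -> g1 -> g2 (the only
   nonzero part of the bracket).  A linear functional mu on g2 is represented
   by a column vector, mu(z) = (z *m mu) 0 0. *)

Definition dotv (R : comNzRingType) (n : nat) (u v : 'rV[R]_n) : R := (u *m v^T) 0 0.

Definition strat2_bracket (R : comNzRingType) (n m : nat)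
    (br : 'rV[R]_n -> 'rV[R]_n -> 'rV[R]_m) : Prop :=
  [/\ (forall a x y z, br (a *: x + y) z = a *: br x z + br y z),
      (forall x y, br x y = - br y x),
      (forall z : 'rV[R]_m, exists s : seq ('rV[R]_n * 'rV[R]_n),
          z = \sum_(p <- s) br p.1 p.2)
    & (0 < m)%N].

Definition isJ (R : comNzRingType) (n m : nat)
    (br : 'rV[R]_n -> 'rV[R]_n -> 'rV[R]_m) (mu : 'cV[R]_m) (T : 'M[R]_n) : Prop :=
  forall x x' : 'rV[R]_n, dotv (x *m T) x' = (br x x' *m mu) 0 0.

Definition inV (R : comNzRingType) (n m : nat)
    (br : 'rV[R]_n -> 'rV[R]_n -> 'rV[R]_m) (T : 'M[R]_n) : Prop :=
  exists mu : 'cV[R]_m, isJ br mu T.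

Definition n_eigs (F : fieldType) (n : nat) (A : 'M[F]_n) (k : nat) : Prop :=
  exists s : seq F, [/\ uniq s, size s = k &
     forall z, eigenvalue A z <-> z \in s].

Definition cplx (R : rcfType) (n : nat) (A : 'M[R]_n) : 'M[R[i]]_n :=
  map_mx (fun x => (x%:C)%C) A.

Definition inVgen (R : rcfType) (n m : nat)
    (br : 'rV[R]_n -> 'rV[R]_n -> 'rV[R]_m) (S : 'M[R]_n) : Prop :=
  inV br S /\ exists k, n_eigs (cplx S) k /\
    forall T k', inV br T -> n_eigs (cplx T) k' -> (k' <= k)%N.

Definition is_orth_proj (R : fieldType) (n : nat) (E : 'M[R]_n) (e p : 'rV[R]_n) : Prop :=
  (p <= E)%MS /\ forall w : 'rV[R]_n, (w <= E)%MS -> dotv (e - p) w = 0.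

From mathcomp Require Import all_boot all_algebra.
From mathcomp Require Import complex.
From mathcomp Require Import ring zify.

Set Implicit Arguments.
Unset Strict Implicit.
Unset Printing Implicit Defensive.

Import GRing.Theory Num.Theory.
Local Open Scope ring_scope.

(* Let z be a complex eigenvalue of S. As S is skew, S^2 is symmetric, z^2 = l is a
   real eigenvalue of S^2, and the orthogonal projection p of e onto the l-eigenspace
   of S^2 is e q(S^2) for a polynomial q of degree < N.  The hypothesis on T gives
   p T = p S T = 0, and from p one builds a complex eigenvector of S for z that T
   kills.  So every eigenvalue of S is an eigenvalue of S + bT for all real b; since
   S + bT lies in V and S has the maximal number of eigenvalues, the two spectra
   coincide.  Hence (prod_z (S + bT - z))^n = 0 for all b, which, read as a
   polynomial identity in 1/b, makes T nilpotent; a nilpotent skew-symmetric real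
   matrix is zero. *)

Section RealTranspose.
Variable R : realDomainType.

Lemma mulmx_trmx_eq0 p q (Y : 'M[R]_(p, q)) : Y *m Y^T = 0 -> Y = 0.
Proof.
move=> YYt0; apply/matrixP => i j; rewrite mxE.
have : (Y *m Y^T) i i = 0 by rewrite YYt0 mxE.
rewrite mxE => /eqP; rewrite psumr_eq0 => [/allP/(_ j (mem_index_enum _))|k _].
  by rewrite mxE -expr2 sqrf_eq0 => /eqP.
by rewrite mxE -expr2 sqr_ge0.
Qed.

Lemma mulmx_trmx_cancel p q r (Y : 'M[R]_(p, q)) (B : 'M[R]_(q, r)) :
  Y *m B *m B^T = 0 -> Y *m B = 0.
Proof.
by move=> YBBt0; apply: mulmx_trmx_eq0; rewrite trmx_mul mulmxA YBBt0 mul0mx.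
Qed.

Lemma dotv_self_ge0 n (x : 'rV[R]_n) : 0 <= dotv x x.
Proof. by rewrite /dotv mxE sumr_ge0 // => k _; rewrite mxE -expr2 sqr_ge0. Qed.

Lemma dotv_self_eq0 n (x : 'rV[R]_n) : dotv x x = 0 -> x = 0.
Proof.
by move=> xx0; apply: mulmx_trmx_eq0; apply/matrixP => i j; rewrite !ord1 [RHS]mxE.
Qed.

Lemma skew_quad_eq0 n (S : 'M[R]_n) (p : 'rV[R]_n) : S^T = - S -> p *m S *m p^T = 0.
Proof.
move=> skS; apply/matrixP => i j; rewrite !ord1 [RHS]mxE.
have /matrixP/(_ 0 0) : (p *m S *m p^T)^T = - (p *m S *m p^T).
  by rewrite !trmx_mul trmxK skS mulNmx mulmxN mulmxA.
rewrite [LHS]mxE [RHS]mxE => /eqP; rewrite -addr_eq0 -mulr2n mulrn_eq0 /=.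
by move/eqP.
Qed.

Lemma sym_nilpotent_eq0 n (B : 'M[R]_n) k : B^T = B -> B ^+ k = 0 -> B = 0.
Proof.
move=> symB; elim: k => [|k IHk] Bk; first by rewrite -[B]mulr1 -(expr0 B) Bk mulr0.
case: k IHk Bk => [|k] IHk Bk; first by rewrite -(expr1 B).
apply: IHk; rewrite exprSr -mulmxE; apply: mulmx_trmx_cancel.
by rewrite symB !mulmxE -!exprSr.
Qed.

Lemma skew_nilpotent_eq0 n (T : 'M[R]_n) k : T^T = - T -> T ^+ k = 0 -> T = 0.
Proof.
move=> skT Tk; apply: mulmx_trmx_eq0; apply: (@sym_nilpotent_eq0 _ _ k).
  by rewrite trmx_mul trmxK.
rewrite skT mulmxN mulmxE -expr2 exprNn -exprM mul2n -addnn exprD Tk.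
by rewrite mul0r mulr0.
Qed.

End RealTranspose.

Section HornerMx.
Variables (R : comNzRingType) (n : nat).
Implicit Types (A : 'M[R]_n.+1) (p q : {poly R}).

Lemma horner_mx_XsubC A l : horner_mx A ('X - l%:P) = A - l%:M.
Proof. by rewrite rmorphB /= horner_mx_X horner_mx_C. Qed.

Lemma horner_mx_coef A p : horner_mx A p = \sum_(i < size p) p`_i *: A ^+ i.
Proof.
rewrite -{1}[p]coefK poly_def linear_sum /=; apply: eq_bigr => i _.
by rewrite linearZ /= rmorphXn /= horner_mx_X.
Qed.

Lemma horner_mx_sym A p : A^T = A -> (horner_mx A p)^T = horner_mx A p.
Proof.
move=> symA; elim/poly_ind: p => [|p c IHp]; first by rewrite rmorph0 trmx0.
rewrite rmorphD rmorphM /= horner_mx_X horner_mx_C linearD /= tr_scalar_mx.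
by rewrite -mulmxE trmx_mul IHp symA (comm_horner_mx p (erefl (A *m A))).
Qed.

Lemma horner_mx_eigenvector A (w : 'rV[R]_n.+1) l p :
  w *m A = l *: w -> w *m horner_mx A p = p.[l] *: w.
Proof.
move=> wA; elim/poly_ind: p => [|p c IHp].
  by rewrite rmorph0 mulmx0 horner0 scale0r.
rewrite rmorphD rmorphM /= horner_mx_X horner_mx_C mulmxDr -mulmxE mulmxA IHp.
by rewrite -scalemxAl wA scalerA mul_mx_scalar hornerMXaddC scalerDl.
Qed.

Lemma krylov_horner_sqr (S T : 'M[R]_n.+1) (e : 'rV[R]_n.+1) q k :
  (size q <= k)%N -> (forall j, (j < 2 * k)%N -> e *m S ^+ j *m T = 0) ->
  e *m horner_mx (S ^+ 2) q *m T = 0 /\ e *m horner_mx (S ^+ 2) q *m S *m T = 0.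
Proof.
move=> size_q eST0; rewrite horner_mx_coef mulmx_sumr !mulmx_suml.
split; rewrite big1 // => i _; rewrite -scalemxAr -!scalemxAl -exprM.
  by rewrite eST0 ?scaler0 //; have := leq_trans (ltn_ord i) size_q; lia.
rewrite -[e *m _ *m S]mulmxA mulmxE -exprSr eST0 ?scaler0 //.
by have := leq_trans (ltn_ord i) size_q; lia.
Qed.

End HornerMx.

Section SymmetricMx.
Variables (R : realDomainType) (n : nat).
Implicit Types (A : 'M[R]_n.+1) (p q : {poly R}).

Lemma sym_horner_mx_sqr_cancel A p q :
  A^T = A -> horner_mx A (p * q ^+ 2) = 0 -> horner_mx A (p * q) = 0.
Proof.
move=> symA; rewrite expr2 !rmorphM /= -!mulmxE mulmxA => pqq0.
by apply: mulmx_trmx_cancel; rewrite horner_mx_sym.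
Qed.

Lemma sym_horner_mx_prod_XsubC_cancel A (s t : seq R) :
  A^T = A -> {subset t <= s} ->
  horner_mx A (\prod_(l <- s) ('X - l%:P) * \prod_(l <- t) ('X - l%:P)) = 0 ->
  horner_mx A (\prod_(l <- s) ('X - l%:P)) = 0.
Proof.
move=> symA; elim: t => [|l t IHt] t_s; first by rewrite big_nil mulr1.
have l_s : l \in s by apply: t_s; rewrite mem_head.
move=> st0; apply: IHt => [x xt|]; first by apply: t_s; rewrite inE xt orbT.
move: st0; rewrite big_cons (big_rem _ l_s) /=.
set r := \prod_(_ <- rem l s) _; set u := \prod_(_ <- t) _.
have -> : ('X - l%:P) * r * (('X - l%:P) * u) = (r * u) * ('X - l%:P) ^+ 2 by ring.
have -> : ('X - l%:P) * r * u = (r * u) * ('X - l%:P) by ring.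
exact: sym_horner_mx_sqr_cancel.
Qed.

End SymmetricMx.

Lemma char_poly_split (F : closedFieldType) n (A : 'M[F]_n) :
  {rs | char_poly A = \prod_(r <- rs) ('X - r%:P)}.
Proof.
have [rs ->] := closed_field_poly_normal (char_poly A).
by exists rs; rewrite (monicP (char_poly_monic _)) scale1r.
Qed.

Section Complexification.
Variable R : rcfType.
Local Open Scope complex_scope.
Local Notation toC := (map_mx (real_complex R)).
Local Notation Re := (@complex.Re R).
Local Notation Im := (@complex.Im R).

Lemma Re_mulmx_real n (v : 'rV[R[i]]_n) (A : 'M[R]_n) :
  map_mx Re (v *m toC A) = map_mx Re v *m A.
Proof.
have ReD : {morph Re : x y / x + y} by case=> ? ? [].
apply/matrixP => i j; rewrite !mxE (big_morph _ ReD (erefl _)).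
by apply: eq_bigr => k _; rewrite !mxE; case: (v i k) => a b /=; rewrite mulr0 subr0.
Qed.

Lemma Im_mulmx_real n (v : 'rV[R[i]]_n) (A : 'M[R]_n) :
  map_mx Im (v *m toC A) = map_mx Im v *m A.
Proof.
have ImD : {morph Im : x y / x + y} by case=> ? ? [].
apply/matrixP => i j; rewrite !mxE (big_morph _ ImD (erefl _)).
by apply: eq_bigr => k _; rewrite !mxE; case: (v i k) => a b /=; rewrite mulr0 add0r.
Qed.

Lemma complex_mx_eq0 m n (v : 'M[R[i]]_(m, n)) :
  map_mx Re v = 0 -> map_mx Im v = 0 -> v = 0.
Proof.
move=> /matrixP Rev0 /matrixP Imv0; apply/matrixP => i j.
by have := Rev0 i j; have := Imv0 i j; rewrite !mxE; case: (v i j) => a b /= -> ->.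
Qed.

Lemma sym_eigenvalue_real n (A : 'M[R]_n) (r : R[i]) :
  A^T = A -> eigenvalue (toC A) r -> r = (Re r)%:C.
Proof.
case: r => a b symA /eigenvalueP [v vA v_neq0] /=; suff -> : b = 0 by [].
set x := map_mx Re v; set y := map_mx Im v.
have xA : x *m A = a *: x - b *: y.
  rewrite -Re_mulmx_real vA; apply/matrixP => i j; rewrite !mxE.
  by case: (v i j).
have yA : y *m A = a *: y + b *: x.
  rewrite -Im_mulmx_real vA; apply/matrixP => i j; rewrite !mxE.
  by case: (v i j) => /= ? ?; rewrite addrC.
have : x *m A *m y^T = x *m (y *m A)^T by rewrite trmx_mul symA mulmxA.
rewrite xA yA mulmxBl [(_ + _)^T]linearD /= !linearZ /= mulmxDr -!scalemxAl -!scalemxAr.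
move=> /addrI/eqP; rewrite eq_sym -subr_eq0 opprK -scalerDr scalemx_eq0.
case/orP=> [/eqP // | /eqP/matrixP/(_ 0 0)]; rewrite [LHS]mxE [RHS]mxE.
rewrite -[(x *m x^T) 0 0]/(dotv x x) -[(y *m y^T) 0 0]/(dotv y y).
move/eqP; rewrite paddr_eq0 ?dotv_self_ge0 //.
case/andP=> /eqP/dotv_self_eq0 x0 /eqP/dotv_self_eq0 y0.
by move: v_neq0; rewrite (complex_mx_eq0 x0 y0) eqxx.
Qed.

Lemma sym_horner_mx_prod_eigenvalues n (A : 'M[R]_n.+1) (s : seq R) :
  A^T = A -> (forall z, eigenvalue A z <-> z \in s) ->
  horner_mx A (\prod_(l <- s) ('X - l%:P)) = 0.
Proof.
move=> symA spec_A; have [rs char_rs] := char_poly_split (toC A).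
have rs_eig r : r \in rs -> eigenvalue (toC A) r.
  by move=> r_rs; rewrite eigenvalue_root_char char_rs root_prod_XsubC.
have rs_real r : r \in rs -> r = (Re r)%:C.
  by move=> r_rs; apply: sym_eigenvalue_real (rs_eig r r_rs).
apply: (@sym_horner_mx_prod_XsubC_cancel _ _ A s (map Re rs)) => //.
  move=> _ /mapP[r r_rs ->]; apply/spec_A.
  by have := rs_eig r r_rs; rewrite {1}(rs_real r r_rs) eigenvalue_map.
suff rs0 : horner_mx A (\prod_(l <- map Re rs) ('X - l%:P)) = 0.
  by rewrite rmorphM /= rs0 mulr0.
apply: (map_mx_inj (f := real_complex R)).
rewrite map_horner_mx rmorph0 /= -(Cayley_Hamilton (toC A)) char_rs big_map rmorph_prod.
congr horner_mx; apply: eq_big_seq => r r_rs /=.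
by rewrite rmorphB /= map_polyX map_polyC /= -rs_real.
Qed.

Lemma sym_eigenspace_proj_horner n (A : 'M[R]_n.+1) (s : seq R) (e : 'rV[R]_n.+1) l :
  A^T = A -> uniq s -> (forall z, eigenvalue A z <-> z \in s) -> l \in s ->
  exists2 q : {poly R}, (size q <= size s)%N &
    is_orth_proj (eigenspace A l) e (e *m horner_mx A q).
Proof.
move=> symA uniq_s spec_A l_s.
(* Lagrange: q = L / L(l) is 1 at l and 0 at the other eigenvalues of A. *)
set L := \prod_(x <- rem l s) ('X - x%:P).
have Ll_neq0 : L.[l] != 0 by rewrite -/(root L l) root_prod_XsubC mem_rem_uniqF.
exists (L.[l]^-1 *: L).
  rewrite (leq_trans (size_scale_leq _ _)) // size_prod_XsubC.
  by rewrite (perm_size (perm_to_rem l_s)).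
split.
  apply/eigenspaceP; rewrite -mulmxA scalemxAr; congr (_ *m _).
  apply/eqP; rewrite -subr_eq0.
  rewrite -mul_mx_scalar -mulmxBr -horner_mx_XsubC mulmxE -rmorphM /=.
  have prod_s : \prod_(x <- s) ('X - x%:P) = ('X - l%:P) * L by rewrite (big_rem _ l_s).
  by rewrite -scalerAl mulrC -prod_s linearZ /= sym_horner_mx_prod_eigenvalues ?scaler0.
move=> w /eigenspaceP wA.
have -> : e - e *m horner_mx A (L.[l]^-1 *: L) = e *m horner_mx A (1 - L.[l]^-1 *: L).
  by rewrite rmorphB /= rmorph1 mulmxBr mulmx1.
rewrite /dotv -mulmxA -(horner_mx_sym _ symA) -trmx_mul (horner_mx_eigenvector _ wA).
by rewrite !hornerE mulVf // subrr scale0r trmx0 mulmx0 mxE.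
Qed.

Lemma skew_eigenvector_of_sqr n (S T : 'M[R]_n) (p : 'rV[R]_n) (z : R[i]) (l : R) :
  S^T = - S -> p != 0 -> z ^+ 2 = l%:C -> p *m S *m S = l *: p ->
  p *m T = 0 -> p *m S *m T = 0 ->
  exists2 v : 'rV[R[i]]_n, v != 0 & v *m toC S = z *: v /\ v *m toC T = 0.
Proof.
move=> skS p_neq0 z2 pSS pT0 pST0.
(* v S = z v because p S^2 = z^2 p; if v = 0 then p S = -z p, and p S p^T = 0
   forces z = 0, so that p itself is an eigenvector. *)
set v := toC (p *m S) + z *: toC p.
have [v0 | v_neq0] := eqVneq v 0; last first.
  exists v => //; split.
    rewrite /v mulmxDl -scalemxAl -!map_mxM pSS map_mxZ /= -z2.
    by rewrite scalerDr scalerA -expr2 addrC.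
  by rewrite /v mulmxDl -scalemxAl -!map_mxM pST0 pT0 !map_mx0 scaler0 addr0.
move/eqP: v0; rewrite addr_eq0 => /eqP pS.
have z0 : z = 0.
  have /eqP := congr1 (mulmx^~ (toC p)^T) pS.
  rewrite map_trmx -map_mxM mulNmx -scalemxAl -map_mxM skew_quad_eq0 // map_mx0.
  rewrite eq_sym oppr_eq0 scalemx_eq0 map_mx_eq0 => /orP[/eqP // | /eqP/mulmx_trmx_eq0 p0].
  by rewrite p0 eqxx in p_neq0.
exists (toC p); first by rewrite map_mx_eq0.
by rewrite -!map_mxM pT0 pS z0 !scale0r oppr0 map_mx0.
Qed.

End Complexification.

Section BracketSpace.
Variables (R : comNzRingType) (n m : nat) (br : 'rV[R]_n -> 'rV[R]_n -> 'rV[R]_m).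

Lemma dotv_delta (T : 'M[R]_n) i j : dotv (delta_mx 0 i *m T) (delta_mx 0 j) = T i j.
Proof. by rewrite /dotv trmx_delta -rowE -colE !mxE. Qed.

Lemma inV_skew T : strat2_bracket br -> inV br T -> T^T = - T.
Proof.
case=> _ br_anti _ _ [mu JT]; apply/matrixP => i j.
by rewrite !mxE -!dotv_delta !JT br_anti mulNmx mxE.
Qed.

Lemma inV_addZ b S T : inV br S -> inV br T -> inV br (S + b *: T).
Proof.
move=> [mu JS] [nu JT]; exists (mu + b *: nu) => x x'.
have entryDZ (A B : 'M[R]_1) c : (A + c *: B) 0 0 = A 0 0 + c * B 0 0 by rewrite !mxE.
rewrite /dotv mulmxDr -scalemxAr mulmxDl -scalemxAl mulmxDr -scalemxAr !entryDZ.
by rewrite -/(dotv (x *m S) x') -/(dotv (x *m T) x') JS JT.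
Qed.

End BracketSpace.

Section KrylovEigenvector.
Variables (R : rcfType) (n : nat) (S T : 'M[R]_n.+1) (e : 'rV[R]_n.+1) (s : seq R).
Hypotheses (skS : S^T = - S) (uniq_s : uniq s).
Hypothesis spec_S2 : forall z, eigenvalue (S ^+ 2) z <-> z \in s.
Hypothesis proj_neq0 : forall a, eigenvalue (S ^+ 2) a ->
  forall p, is_orth_proj (eigenspace (S ^+ 2) a) e p -> p != 0.
Hypothesis eST0 : forall j, (j < 2 * size s)%N -> e *m S ^+ j *m T = 0.

Lemma krylov_common_eigenvector z : eigenvalue (cplx S) z ->
  exists2 v : 'rV[R[i]]_n.+1, v != 0 & v *m cplx S = z *: v /\ v *m cplx T = 0.
Proof.
case/eigenvalueP=> v0 v0S v0_neq0.
have symS2 : (S ^+ 2)^T = S ^+ 2 by rewrite expr2 -mulmxE trmx_mul skS mulmxN mulNmx opprK.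
have z2_eig : eigenvalue (cplx (S ^+ 2)) (z ^+ 2).
  apply/eigenvalueP; exists v0 => //.
  by rewrite /cplx rmorphXn /= expr2 -mulmxE mulmxA v0S -scalemxAl v0S scalerA.
have z2_real := sym_eigenvalue_real symS2 z2_eig.
have l_eig : eigenvalue (S ^+ 2) (complex.Re (z ^+ 2)).
  by move: z2_eig; rewrite {1}z2_real eigenvalue_map.
have [q size_q proj_q] :=
  sym_eigenspace_proj_horner e symS2 uniq_s spec_S2 (iffLR (spec_S2 _) l_eig).
have [qT0 qST0] := krylov_horner_sqr size_q eST0.
apply: (skew_eigenvector_of_sqr skS (proj_neq0 l_eig proj_q) z2_real) => //.
by case: proj_q => /eigenspaceP <- _; rewrite expr2 -mulmxE mulmxA.
Qed.

Lemma eigenvalue_pencil b z : eigenvalue (cplx S) z -> eigenvalue (cplx (S + b *: T)) z.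
Proof.
case/krylov_common_eigenvector=> v v_neq0 [vS vT]; apply/eigenvalueP; exists v => //.
by rewrite /cplx map_mxD map_mxZ mulmxDr -scalemxAr vT scaler0 addr0.
Qed.

End KrylovEigenvector.

Lemma n_eigs_exists (F : closedFieldType) n (A : 'M[F]_n) : exists k, n_eigs A k.
Proof.
have [rs char_rs] := char_poly_split A.
exists (size (undup rs)), (undup rs); split=> // [|z]; first exact: undup_uniq.
by rewrite mem_undup eigenvalue_root_char char_rs root_prod_XsubC.
Qed.

Lemma maximal_n_eigs_spectrum (F : closedFieldType) n (A B : 'M[F]_n) (s : seq F) :
  uniq s -> (forall z, eigenvalue A z <-> z \in s) ->
  (forall z, eigenvalue A z -> eigenvalue B z) ->
  (forall k, n_eigs B k -> (k <= size s)%N) ->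
  forall z, eigenvalue B z -> z \in s.
Proof.
move=> uniq_s spec_A AB maxB z Bz.
have [k Bk] := n_eigs_exists B; have [s' [_ size_s' spec_B]] := Bk.
have s_s' : {subset s <= s'} by move=> x /spec_A/AB/spec_B.
have size_le : (size s' <= size s)%N by rewrite size_s' maxB.
have [_ eq_s] := uniq_min_size uniq_s s_s' size_le.
by rewrite eq_s; apply/spec_B.
Qed.

Lemma prod_XsubC_dvd_exp (F : fieldType) (rs s : seq F) : {subset rs <= s} ->
  \prod_(r <- rs) ('X - r%:P) %| (\prod_(x <- s) ('X - x%:P)) ^+ size rs.
Proof.
elim: rs => [|r rs IHrs] rs_s; first by rewrite big_nil dvd1p.
rewrite big_cons exprS dvdp_mul //; first by rewrite dvdp_XsubCl root_prod_XsubC rs_s ?mem_head.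
by apply: IHrs => x x_rs; rewrite rs_s // inE x_rs orbT.
Qed.

Lemma eigenvalues_prod_nilpotent (F : closedFieldType) n (A : 'M[F]_n.+1) (s : seq F) :
  (forall z, eigenvalue A z -> z \in s) -> (\prod_(z <- s) (A - z%:M)) ^+ n.+1 = 0.
Proof.
move=> spec_A; have [rs char_rs] := char_poly_split A.
have size_rs : size rs = n.+1.
  by have := size_char_poly A; rewrite char_rs size_prod_XsubC => -[].
have rs_s : {subset rs <= s}.
  by move=> r r_rs; apply: spec_A; rewrite eigenvalue_root_char char_rs root_prod_XsubC.
have /dvdpP[d char_d] := prod_XsubC_dvd_exp rs_s.
have := congr1 (horner_mx A) char_d.
rewrite size_rs rmorphM /= -char_rs Cayley_Hamilton mulr0 rmorphXn rmorph_prod /=.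
by under eq_bigr do rewrite horner_mx_XsubC.
Qed.

Lemma pencil_nilpotent (F : numFieldType) n (B : 'M[F]_n.+1) (As : seq 'M[F]_n.+1) k :
  (forall i : nat, (\prod_(A <- As) (B + i.+1%:R *: A)) ^+ k = 0) ->
  B ^+ (size As * k) = 0.
Proof.
move=> pencil0.
(* Each entry of P is a polynomial in t vanishing at all positive integers. *)
pose P := (\prod_(A <- As) (map_mx polyC B + 'X *: map_mx polyC A)) ^+ k.
have evalP t : map_mx (horner_eval t) P = (\prod_(A <- As) (B + t *: A)) ^+ k.
  rewrite rmorphXn rmorph_prod /=; congr (_ ^+ _); apply: eq_bigr => A _.
  rewrite rmorphD /= map_mxZ /= -!map_mx_comp /horner_eval hornerX.
  by congr (_ + _ *: _); apply/matrixP => i j; rewrite !mxE /= hornerC.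
have P0 : P = 0.
  apply/matrixP => i j; rewrite mxE.
  apply: (@roots_geq_poly_eq0 _ _ [seq i.+1%:R | i <- iota 0 (size (P i j))]).
  - apply/allP => _ /mapP[x _ ->]; apply/rootP.
    by have := congr1 (fun M : 'M[F]_n.+1 => M i j) (evalP x.+1%:R); rewrite pencil0 !mxE.
  - by rewrite map_inj_uniq ?iota_uniq // => x y /eqP; rewrite eqr_nat eqSS => /eqP.
  - by rewrite size_map size_iota.
have := evalP 0; rewrite P0 raddf0.
under eq_bigr do rewrite scale0r addr0.
by rewrite big_const_seq count_predT iter_mulr_1 -exprM => <-.
Qed.

Lemma pencil_spectrum_nilpotent (C : numClosedFieldType) n (A B : 'M[C]_n.+1) (s : seq C) :
  (forall (i : nat) z, eigenvalue (A + i.+1%:R^-1 *: B) z -> z \in s) ->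
  B ^+ (size s * n.+1) = 0.
Proof.
move=> spec_pencil; rewrite -(size_map (fun z => A - z%:M)).
apply: pencil_nilpotent => i; have i_neq0 : (i.+1%:R : C) != 0 by rewrite pnatr_eq0.
rewrite big_map (eq_bigr (fun z => i.+1%:R *: (A + i.+1%:R^-1 *: B - z%:M))) => [|z _].
  by rewrite scaler_prod exprZn eigenvalues_prod_nilpotent ?scaler0 //; apply: spec_pencil.
by rewrite !scalerBr scalerDr scalerA mulfV // scale1r addrA (addrC B).
Qed.

Theorem lemma3p1 (R : rcfType) (n m : nat)
    (br : 'rV[R]_n -> 'rV[R]_n -> 'rV[R]_m)
    (Hbr : strat2_bracket br)
    (S : 'M[R]_n) (HS : inVgen br S) (e : 'rV[R]_n)
    (He : forall a : R, eigenvalue (S ^+ 2) a ->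
            forall p, is_orth_proj (eigenspace (S ^+ 2) a) e p -> p != 0)
    (N : nat) (HN : n_eigs (S ^+ 2) N) :
  forall T : 'M[R]_n, inV br T ->
    (forall j : nat, (j < 2 * N)%N -> e *m S ^+ j *m T = 0) -> T = 0.
Proof.
case: n br Hbr S HS e He HN => [|n] br Hbr S HS e He HN T VT eST0.
  by apply/matrixP => [[]].
have [VS [k [[sS [uniq_sS size_sS spec_S]] maxS]]] := HS.
have [sA [uniq_sA size_sA spec_S2]] := HN; rewrite -size_sA in eST0.
have skS := inV_skew Hbr VS; have skT := inV_skew Hbr VT.
have spec_pencil b z : eigenvalue (cplx (S + b *: T)) z -> z \in sS.
  apply: (maximal_n_eigs_spectrum uniq_sS spec_S) => [y|k'].
    exact: eigenvalue_pencil skS uniq_sA spec_S2 He eST0 b y.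
  by rewrite size_sS; apply: maxS; apply: inV_addZ.
have nilT : cplx T ^+ (size sS * n.+1) = 0.
  apply: (pencil_spectrum_nilpotent (A := cplx S)) => i z.
  have -> : cplx S + i.+1%:R^-1 *: cplx T = cplx (S + i.+1%:R^-1 *: T).
    by rewrite /cplx map_mxD map_mxZ fmorphV rmorph_nat.
  exact: spec_pencil.
apply: (skew_nilpotent_eq0 (k := size sS * n.+1) skT).
by apply: (map_mx_inj (f := real_complex R)); rewrite rmorphXn map_mx0.
Qed.
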